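(* Let $\phi=(1+\sqrt5)/2$, $R_0=(18-\sqrt5)/11$, $\alpha=R_0-1=2/(\phi+3)$, $\beta=\alpha/2=1/(\phi+3)$ and $\rho=\beta/\phi=(\phi-1)/(\phi+3)$. Let $P^A,P^B,S^A,S^B,Q$ be pairwise disjoint infinite sets of positive integers, each with a fixed enumeration, and for real $x\ge 0$ let $P^c_x$, $S^c_x$, $Q_x$ denote the first $\lfloor x\rfloor$ elements of $P^c$, $S^c$, $Q$ respectively. For $c\in\{A,B\}$, with $c'$ the other element of $\{A,B\}$, and integers $0<k\le t$, define $$F^c_{t,k}=P^c_{\alpha t+4}\cup\big(S^c_{\beta\min(t,\phi k)}\setminus S^c_{\beta(t-k)}\big)\cup\big(S^{c'}_{\beta k}\setminus S^{c'}_{\phi\beta(t-k)}\big)\cup\big(Q_{\rho\min(t,\phi k)}\setminus Q_{\phi\rho(t-k)}\big).$$ Then $\{F^c_{t,k}\}$ is an F-system, and for every positive integer $t$, $\left|\bigcup_{c\in\{A,B\}}\bigcup_{0<\kappa\le\tau\le t}F^c_{\tau,\kappa}\right|\le R_0 t+8$; in particular it is an $R_0$-competitive F-system.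
   Context: F-system: a family $\mathcal F=\{F^c_{t,k}\}$ of sets of positive integers, indexed by $c\in\{A,B\}$ and integers $0<k\le t$, such that (F1) $|F^c_{t,k}|\ge k$ for all $c,t,k$; and (F2) $F^A_{t,k}\cap F^B_{t',k'}=\emptyset$ for all $k\le t$, $k'\le t'$ with $k+k'\le\max(t,t')$. An F-system is $R$-competitive if there is a constant $\lambda$ (independent of $t$) such that for every positive integer $t$, $\left|\bigcup_{c\in\{A,B\}}\bigcup_{0<\kappa\le\tau\le t}F^c_{\tau,\kappa}\right|\le Rt+\lambda$. *)

From Stdlib Require Import Reals.
From mathcomp Require Import all_boot.

Local Open Scope R_scope.
Set Implicit Arguments. Unset Strict Implicit. Unset Printing Implicit Defensive.

Inductive col := CA | CB.
Definition other (c : col) : col := match c with CA => CB | CB => CA end.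

(* floor of a real, as a nat (arguments used are >= 0). Int_part is the floor. *)
Definition flr (x : R) : nat := Z.to_nat (Int_part x).

Definition pref (e : nat -> nat) (x : R) : seq nat := [seq e i | i <- iota 0 (flr x)].

Definition sdiff (s1 s2 : seq nat) : seq nat := [seq x <- s1 | x \notin s2].

Definition scard (s : seq nat) : nat := size (undup s).

Definition disj (s1 s2 : seq nat) : Prop := forall x, x \in s1 -> x \notin s2.

Definition F_system (F : col -> nat -> nat -> seq nat) : Prop :=
  (forall c t k, (0 < k <= t)%N -> all (fun x => 0 < x)%N (F c t k)) /\
  (forall c t k, (0 < k <= t)%N -> (k <= scard (F c t k))%N) /\
  (forall t k t' k', (0 < k <= t)%N -> (0 < k' <= t')%N ->
       (k + k' <= maxn t t')%N -> disj (F CA t k) (F CB t' k')).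

Definition Funion (F : col -> nat -> nat -> seq nat) (t : nat) : seq nat :=
  flatten [seq F c tk.1 tk.2
           | c <- [:: CA; CB],
             tk <- flatten [seq [seq (tau, kap) | kap <- iota 1 tau] | tau <- iota 1 t]].

Definition competitive (Rc : R) (F : col -> nat -> nat -> seq nat) : Prop :=
  exists lambda : R, forall t : nat, (0 < t)%N ->
    INR (scard (Funion F t)) <= Rc * INR t + lambda.

Definition phi_g : R := (1 + sqrt 5) / 2.
Definition R_0 : R := (18 - sqrt 5) / 11.
Definition alpha : R := R_0 - 1.
Definition beta : R := alpha / 2.
Definition rho : R := beta / phi_g.

Definition Fsys (P S : col -> nat -> nat) (Q : nat -> nat) (c : col) (t k : nat)
  : seq nat :=
  let tR := INR t in let kR := INR k in
  pref (P c) (alpha * tR + 4)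
  ++ sdiff (pref (S c) (beta * Rmin tR (phi_g * kR))) (pref (S c) (beta * (tR - kR)))
  ++ sdiff (pref (S (other c)) (beta * kR)) (pref (S (other c)) (phi_g * beta * (tR - kR)))
  ++ sdiff (pref Q (rho * Rmin tR (phi_g * kR))) (pref Q (phi_g * rho * (tR - kR))).

From Stdlib Require Import Reals ZArith Lra Lia Psatz.
From mathcomp Require Import all_boot zify.
Local Open Scope R_scope.
Set Implicit Arguments. Unset Strict Implicit.

(* Each piece of F^c_{t,k} is a window { e i | floor lo <= i < floor hi } of
   one of the five enumerations P^A, P^B, S^A, S^B, Q, and all windows of
   distinct enumerations are disjoint (the enumerations are jointly injective).
   The proof therefore reduces to comparisons of window endpoints:
   - (F1) the four windows of F^c_{t,k} are pairwise disjoint, and their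
     lengths exceed their real lengths minus one; the identities
     R_0 = 2 alpha + 2 beta + rho, phi rho = beta and phi beta = (1+3 sqrt 5)/22
     turn this into the linear inequality F1_budget;
   - (F2) when k + k' <= t, each window of F^c_{t,k} starts above the end of
     the window of F^{c'}_{t',k'} taken from the same enumeration;
   - (competitiveness) every F^c_{tau,kap} with tau <= t lies in the envelope
     made of the prefixes of length alpha t + 4 of P^A, P^B, beta t of S^A,
     S^B and rho t of Q, whose size is at most R_0 t + 8.
   The file first collects facts about floors and windows, then the numerical
   identities, and finally the construction itself in a section. *)

Lemma flr_gt x : x - 1 < INR (flr x).
Proof.
rewrite /flr; have [H1 H2] := base_Int_part x.
case: (Z_le_gt_dec 0 (Int_part x)) => Hz.
- rewrite INR_IZR_INZ Z2Nat.id //; lra.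
- rewrite (_ : Z.to_nat _ = 0%nat) /=; last lia.
  have /IZR_le : (Int_part x <= -1)%Z by lia.
  lra.
Qed.

Lemma flr_le x : 0 <= x -> INR (flr x) <= x.
Proof.
move=> hx; rewrite /flr; have [H1 H2] := base_Int_part x.
case: (Z_le_gt_dec 0 (Int_part x)) => Hz.
- rewrite INR_IZR_INZ Z2Nat.id //.
- rewrite (_ : Z.to_nat _ = 0%nat) /=; [lra | lia].
Qed.

Lemma flr_mono x y : x <= y -> (flr x <= flr y)%N.
Proof.
move=> hxy; rewrite /flr; have [H1 H2] := base_Int_part x.
have [H3 H4] := base_Int_part y.
have : (Int_part x < Int_part y + 1)%Z by apply: lt_IZR; rewrite plus_IZR; lra.
move=> h; apply/leP; lia.
Qed.

Lemma flr0 : flr 0 = 0%N.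
Proof. by apply: INR_eq; apply: Rle_antisym; [apply: flr_le; lra | apply: pos_INR]. Qed.

Lemma INR_subn_ge a b : INR a - INR b <= INR (a - b)%N.
Proof.
case: (leqP b a) => h.
- rewrite -{1}(subnK h) plus_INR; lra.
- have -> : (a - b)%N = 0%N by apply/eqP; rewrite subn_eq0 ltnW.
  have /le_INR : (a <= b)%coq_nat by lia.
  rewrite /=; lra.
Qed.

Definition win (e : nat -> nat) (lo hi : R) : seq nat :=
  map e (iota (flr lo) (flr hi - flr lo)).

Lemma mem_win e lo hi x :
  x \in win e lo hi -> exists2 i, (flr lo <= i < flr hi)%N & x = e i.
Proof. by case/mapP=> i; rewrite mem_iota => hi' ->; exists i => //; lia. Qed.

Lemma pref_win e x : pref e x = win e 0 x.
Proof. by rewrite /win flr0 subn0. Qed.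

Lemma sdiff_pref e lo hi : injective e ->
  sdiff (pref e hi) (pref e lo) = win e lo hi.
Proof.
move=> inj_e; rewrite /sdiff /pref /win filter_map; congr map.
rewrite (@eq_filter _ _ (fun i => flr lo <= i)%N); last first.
  by move=> i /=; rewrite mem_map // mem_iota leq0n add0n /= -leqNgt.
have below n : (n <= flr lo)%N -> [seq i <- iota 0 n | flr lo <= i]%N = [::].
  move=> hn; apply/eqP; rewrite -[_ == _]negbK -has_filter.
  by apply/hasPn => i; rewrite mem_iota /= -ltnNge; lia.
case: (leqP (flr hi) (flr lo)) => h.
- by rewrite below // (_ : (_ - _)%N = 0%N) //; lia.
- rewrite -{1}(subnKC (ltnW h)) iotaD filter_cat below // add0n /=.
  by apply/all_filterP/allP => i; rewrite mem_iota /=; lia.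
Qed.

Lemma size_win e lo hi : size (win e lo hi) = (flr hi - flr lo)%N.
Proof. by rewrite size_map size_iota. Qed.

Lemma size_win_gt e lo hi : 0 <= lo -> hi - lo - 1 < INR (size (win e lo hi)).
Proof.
move=> hlo; rewrite size_win.
have := INR_subn_ge (flr hi) (flr lo); have := flr_gt hi; have := flr_le hlo; lra.
Qed.

Lemma win_sub e lo hi top : hi <= top -> {subset win e lo hi <= win e 0 top}.
Proof.
move=> htop x /mem_win [i hi' ->]; have := flr_mono htop.
by rewrite /win flr0 subn0 => ?; apply: map_f; rewrite mem_iota; lia.
Qed.

Lemma uniq_win e lo hi : injective e -> uniq (win e lo hi).
Proof. by move=> inj_e; rewrite map_inj_uniq // iota_uniq. Qed.

Lemma disj_sym s1 s2 : disj s1 s2 -> disj s2 s1.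
Proof. by move=> h x hx; apply/negP => /h; rewrite hx. Qed.

Lemma disj_cat_l a b s : disj a s -> disj b s -> disj (a ++ b) s.
Proof. by move=> h1 h2 x; rewrite mem_cat => /orP []; [exact: h1 | exact: h2]. Qed.

Lemma disj_cat_r s a b : disj s a -> disj s b -> disj s (a ++ b).
Proof. by move=> h1 h2 x hx; rewrite mem_cat negb_or h1 ?h2. Qed.

Lemma uniq_cat_disj a b : uniq a -> uniq b -> disj a b -> uniq (a ++ b).
Proof.
move=> ua ub hab; rewrite cat_uniq ua ub andbT.
by apply/hasPn => x hx; apply/negP => /hab; rewrite hx.
Qed.

Lemma Funion_sub (F : col -> nat -> nat -> seq nat) t (U : seq nat) :
  (forall c tau kap, (0 < kap <= tau)%N -> (tau <= t)%N -> {subset F c tau kap <= U}) ->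
  {subset Funion F t <= U}.
Proof.
move=> H x; rewrite /Funion /= cats0 flatten_cat mem_cat.
by case/orP => /flattenP [s /mapP [p /allpairsPdep [tau [kap [ht hk ->]]] ->]];
  move: ht hk; rewrite !mem_iota => ht hk; apply: H => /=; lia.
Qed.

Lemma sqrt5_sq : sqrt 5 * sqrt 5 = 5.
Proof. by apply: sqrt_sqrt; lra. Qed.

Lemma sqrt5_bounds : 2 < sqrt 5 < 3.
Proof. have := sqrt5_sq; have := sqrt_pos 5; nra. Qed.

Lemma phi_pos : 0 < phi_g.
Proof. rewrite /phi_g; have := sqrt_pos 5; lra. Qed.

Lemma alpha_eq : alpha = (7 - sqrt 5) / 11.
Proof. rewrite /alpha /R_0; lra. Qed.

Lemma beta_eq : beta = (7 - sqrt 5) / 22.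
Proof. rewrite /beta alpha_eq; lra. Qed.

Lemma phi_beta_eq : phi_g * beta = (1 + 3 * sqrt 5) / 22.
Proof. rewrite beta_eq /phi_g; have := sqrt5_sq; nra. Qed.

Lemma phi_rho_eq : phi_g * rho = beta.
Proof. have hp := phi_pos; rewrite /rho; field; lra. Qed.

Lemma rho_eq : rho = (2 * sqrt 5 - 3) / 11.
Proof.
have hp := phi_pos; apply: (Rmult_eq_reg_l phi_g); last lra.
rewrite phi_rho_eq beta_eq /phi_g; have := sqrt5_sq; nra.
Qed.

Lemma consts_pos : 0 < alpha /\ 0 < beta /\ 0 < rho.
Proof. rewrite alpha_eq beta_eq rho_eq; have := sqrt5_bounds; lra. Qed.

Lemma R0_eq : R_0 = 2 * alpha + 2 * beta + rho.
Proof. rewrite rho_eq beta_eq alpha_eq /R_0; lra. Qed.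

(* Numerical heart of (F1): if each of the four pieces of F^c_{t,k} has more
   elements than its real length minus one, together they have more than k - 1;
   both cases t <= phi k and t > phi k of the minimum are linear in sqrt 5. *)
Lemma F1_budget (t k n0 n1 n2 n3 : R) : 0 < k <= t ->
  n0 > alpha * t + 3 -> 0 <= n1 -> 0 <= n2 -> 0 <= n3 ->
  n1 > beta * Rmin t (phi_g * k) - beta * (t - k) - 1 ->
  n2 > beta * k - phi_g * beta * (t - k) - 1 ->
  n3 > rho * Rmin t (phi_g * k) - phi_g * rho * (t - k) - 1 ->
  n0 + n1 + n2 + n3 > k - 1.
Proof.
move=> hk h0 p1 p2 p3 h1 h2 h3.
rewrite phi_rho_eq in h3; rewrite phi_beta_eq in h2.
rewrite /Rmin in h1 h3; case: (Rle_dec t (phi_g * k)) h1 h3 => _ h1 h3.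
- rewrite alpha_eq beta_eq rho_eq in h0 h1 h2 h3; lra.
- rewrite Rmult_comm Rmult_assoc (Rmult_comm k) -Rmult_assoc phi_beta_eq in h1.
  rewrite Rmult_comm Rmult_assoc (Rmult_comm k) -Rmult_assoc phi_rho_eq in h3.
  rewrite alpha_eq beta_eq in h0 h1 h2 h3; lra.
Qed.

Lemma scaled_min_le (c t x d : R) :
  0 <= c -> x <= d -> c * Rmin t (phi_g * x) <= phi_g * c * d.
Proof.
move=> hc hxd; have hp := phi_pos.
have := Rmult_le_compat_l c _ _ hc (Rmin_r t (phi_g * x)).
have : 0 <= c * phi_g * (d - x) by apply: Rmult_le_pos; [apply: Rmult_le_pos|]; lra.
lra.
Qed.

Inductive source := SrcP of col | SrcS of col | SrcQ.

Section Construction.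
Variables (P S : col -> nat -> nat) (Q : nat -> nat).
Hypotheses (injP : forall c, injective (P c)) (injS : forall c, injective (S c))
  (injQ : injective Q)
  (posP : forall c i, (0 < P c i)%N) (posS : forall c i, (0 < S c i)%N)
  (posQ : forall i, (0 < Q i)%N)
  (dPP : forall i j, P CA i <> P CB j) (dSS : forall i j, S CA i <> S CB j)
  (dPS : forall c c' i j, P c i <> S c' j)
  (dPQ : forall c i j, P c i <> Q j) (dSQ : forall c i j, S c i <> Q j).

Definition enum (s : source) : nat -> nat :=
  match s with SrcP c => P c | SrcS c => S c | SrcQ => Q end.

Lemma enum_pos s i : (0 < enum s i)%N.
Proof. by case: s => [c|c|] /=; [exact: posP | exact: posS | exact: posQ]. Qed.

Lemma enum_inj s s' i j : enum s i = enum s' j -> s = s' /\ i = j.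
Proof.
case: s => [[]|[]|]; case: s' => [[]|[]|] //= e;
  try by [split => //; move: e; apply: injP | split => //; move: e; apply: injS
         | split => //; apply: injQ].
all: exfalso; first [ exact: dPP e | exact: dPP (esym e) | exact: dSS e
  | exact: dSS (esym e) | exact: dPS e | exact: dPS (esym e) | exact: dPQ e
  | exact: dPQ (esym e) | exact: dSQ e | exact: dSQ (esym e) ].
Qed.

Local Notation F := (Fsys P S Q).

Lemma uniq_win_enum s lo hi : uniq (win (enum s) lo hi).
Proof. by apply: uniq_win => i j /enum_inj []. Qed.

Lemma disj_win_enum s lo hi s' lo' hi' :
  (s = s' -> hi' <= lo) -> disj (win (enum s) lo hi) (win (enum s') lo' hi').
Proof.
move=> hsep x /mem_win [i hi_i ->]; apply/negP => /mem_win [j hj /enum_inj [es eij]].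
by subst; have := flr_mono (hsep erefl); lia.
Qed.

Lemma Fsys_win c t k : F c t k =
  win (enum (SrcP c)) 0 (alpha * INR t + 4)
  ++ win (enum (SrcS c)) (beta * (INR t - INR k)) (beta * Rmin (INR t) (phi_g * INR k))
  ++ win (enum (SrcS (other c))) (phi_g * beta * (INR t - INR k)) (beta * INR k)
  ++ win (enum SrcQ) (phi_g * rho * (INR t - INR k)) (rho * Rmin (INR t) (phi_g * INR k)).
Proof. by rewrite /Fsys pref_win !sdiff_pref. Qed.

Lemma Fsys_pos c t k : all (fun x => 0 < x)%N (F c t k).
Proof.
rewrite Fsys_win !all_cat; apply/and4P.
by split; apply/allP => x /mem_win [i _ ->]; apply: enum_pos.
Qed.

(* The four windows of F^c_{t,k} come from four distinct sources. *)
Lemma Fsys_uniq c t k : uniq (F c t k).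
Proof.
rewrite Fsys_win.
do 3 (apply: uniq_cat_disj; [exact: uniq_win_enum | |
      by repeat apply: disj_cat_r; apply: disj_win_enum; case: c]).
exact: uniq_win_enum.
Qed.

Lemma Fsys_card c t k : (0 < k <= t)%N -> (k <= scard (F c t k))%N.
Proof.
move=> hk; have [ha [hb hr]] := consts_pos; have hp := phi_pos.
have hkt : 0 < INR k <= INR t by split; [apply: lt_0_INR | apply: le_INR]; lia.
suff : INR k - 1 < INR (size (F c t k)).
  move=> h; rewrite /scard undup_id ?Fsys_uniq //.
  have : (k < (size (F c t k)).+1)%coq_nat by apply: INR_lt; rewrite S_INR; lra.
  by move/ltP; rewrite ltnS.
rewrite Fsys_win !size_cat !plus_INR -!Rplus_assoc.
apply: (@F1_budget (INR t) (INR k)) => //; try exact: pos_INR.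
all: match goal with |- context [size (win ?e ?lo ?hi)] =>
       have /(size_win_gt e hi) : 0 <= lo by do ? [lra | apply: Rmult_le_pos] end.
all: lra.
Qed.

(* The heart of (F2): when k + k' <= t, every window of F^c_{t,k} lies above
   the window of F^{c'}_{t',k'} drawn from the same enumeration. *)
Lemma Fsys_disj_dominant c t k t' k' :
  (k + k' <= t)%N -> disj (F c t k) (F (other c) t' k').
Proof.
move=> hkk; have [ha [hb hr]] := consts_pos.
have hk' : INR k' <= INR t - INR k.
  have /le_INR : (k + k' <= t)%coq_nat by lia.
  by rewrite plus_INR; lra.
rewrite !Fsys_win; repeat apply: disj_cat_l; repeat apply: disj_cat_r.
all: apply: disj_win_enum; case: c => //= _.
all: by [apply: Rmult_le_compat_l; lra | apply: scaled_min_le; lra].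
Qed.

Lemma Fsys_disj t k t' k' : (k + k' <= maxn t t')%N -> disj (F CA t k) (F CB t' k').
Proof.
case: (leqP t' t) => htt.
- exact: (@Fsys_disj_dominant CA).
- by rewrite addnC => h; apply/disj_sym/(@Fsys_disj_dominant CB).
Qed.

Theorem Fsys_F_system : F_system F.
Proof.
split; [|split] => [c t k _ | c t k | t k t' k' _ _]; first exact: Fsys_pos.
- exact: Fsys_card.
- exact: Fsys_disj.
Qed.

Definition envelope (t : nat) : seq nat :=
  let a := alpha * INR t + 4 in let b := beta * INR t in
  win (enum (SrcP CA)) 0 a ++ win (enum (SrcP CB)) 0 a
  ++ win (enum (SrcS CA)) 0 b ++ win (enum (SrcS CB)) 0 b
  ++ win (enum SrcQ) 0 (rho * INR t).

(* Monotonicity of all window ends in t puts F^c_{tau,kap} inside the envelope. *)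
Lemma Fsys_sub_envelope c tau kap t :
  (0 < kap <= tau)%N -> (tau <= t)%N -> {subset F c tau kap <= envelope t}.
Proof.
move=> hk htk; have [ha [hb hr]] := consts_pos; have hp := phi_pos.
have htau : INR kap <= INR tau <= INR t by split; apply: le_INR; lia.
have hmin : Rmin (INR tau) (phi_g * INR kap) <= INR t.
  by have := Rmin_l (INR tau) (phi_g * INR kap); lra.
have hPa : alpha * INR tau + 4 <= alpha * INR t + 4 by nra.
have hSmin : beta * Rmin (INR tau) (phi_g * INR kap) <= beta * INR t by nra.
have hSk : beta * INR kap <= beta * INR t by nra.
have hQ : rho * Rmin (INR tau) (phi_g * INR kap) <= rho * INR t by nra.
move=> x; rewrite Fsys_win /envelope !mem_cat => /or4P [] hx.
- by case: c hx => hx; rewrite (win_sub hPa hx) ?orbT.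
- by case: c hx => hx; rewrite (win_sub hSmin hx) ?orbT.
- by case: c hx => hx; rewrite (win_sub hSk hx) ?orbT.
- by rewrite (win_sub hQ hx) ?orbT.
Qed.

(* The envelope has at most (2 alpha + 2 beta + rho) t + 8 = R_0 t + 8 elements. *)
Lemma size_envelope t : INR (size (envelope t)) <= R_0 * INR t + 8.
Proof.
have [ha [hb hr]] := consts_pos; have ht := pos_INR t.
rewrite /envelope !size_cat !size_win flr0 !subn0 !plus_INR R0_eq.
have := @flr_le (alpha * INR t + 4); have := @flr_le (beta * INR t).
have := @flr_le (rho * INR t); nra.
Qed.

Theorem Funion_card t : INR (scard (Funion F t)) <= R_0 * INR t + 8.
Proof.
apply: Rle_trans (size_envelope t); apply: le_INR; apply/leP.
rewrite /scard; apply: uniq_leq_size; first exact: undup_uniq.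
move=> x; rewrite mem_undup; apply: Funion_sub => c tau kap.
exact: Fsys_sub_envelope.
Qed.
End Construction.

Theorem mainTheorem4 (P S : col -> nat -> nat) (Q : nat -> nat)
  (injP : forall c, injective (P c)) (injS : forall c, injective (S c))
  (injQ : injective Q)
  (posP : forall c i, (0 < P c i)%N) (posS : forall c i, (0 < S c i)%N)
  (posQ : forall i, (0 < Q i)%N)
  (dPP : forall i j, P CA i <> P CB j) (dSS : forall i j, S CA i <> S CB j)
  (dPS : forall c c' i j, P c i <> S c' j)
  (dPQ : forall c i j, P c i <> Q j) (dSQ : forall c i j, S c i <> Q j) :
  F_system (Fsys P S Q) /\
  (forall t : nat, (0 < t)%N ->
     INR (scard (Funion (Fsys P S Q) t)) <= R_0 * INR t + 8) /\
  competitive R_0 (Fsys P S Q).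
Proof.
have bound t : INR (scard (Funion (Fsys P S Q) t)) <= R_0 * INR t + 8.
  by apply: Funion_card.
split; first by apply: Fsys_F_system.
by split=> [t _ | ]; [apply: bound | exists 8 => t _; apply: bound].
Qed.
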